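(* Let $G=(V,E)$ be a graph on $V=\{1,\ldots,n\}$ and $b(\mathbf x)=\sum_{ij\in E}a_{ij}x_ix_j$ with $a_{ij}\neq 0$ for all $ij\in E$. Then $Q=\operatorname{conv}(B)$ if and only if every cycle in $G$ contains an even number of positive edges and an even number of negative edges.
   Context: An edge $ij$ is positive if $a_{ij}>0$ and negative if $a_{ij}<0$. $B=\{(\mathbf x,z)\in[0,1]^n\times\mathbb R: z=b(\mathbf x)\}$ is the graph of $b$ and $\operatorname{conv}(B)$ its convex hull. The McCormick polytopes are $P=\{(\mathbf x,\mathbf y)\in[0,1]^n\times[0,1]^{|E|}: y_{ij}\le x_i,\ y_{ij}\le x_j,\ y_{ij}\ge x_i+x_j-1\ \forall ij\in E\}$ and $Q=\{(\mathbf x,z)\in[0,1]^n\times\mathbb R:\exists\mathbf y\in[0,1]^{|E|}\text{ with }(\mathbf x,\mathbf y)\in P,\ z=\sum_{ij\in E}a_{ij}y_{ij}\}$. *)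

From Stdlib Require Import Reals.
From mathcomp Require Import all_boot.

Set Implicit Arguments.
Unset Strict Implicit.
Unset Printing Implicit Defensive.

(* The graph G = (V,E) has vertex set 'I_n (= {0,...,n-1}, a relabelling of
   {1,...,n}); it is given by a symmetric irreflexive adjacency relation adj.
   An (undirected) edge ij is represented by the pair i < j with adj i j.
   The coefficients a : 'I_n -> 'I_n -> R are assumed symmetric (a_ij = a_ji). *)

Definition in_box (n : nat) (x : 'I_n -> R) : Prop :=
  forall i, (Rle 0 (x i) /\ Rle (x i) 1).

Definition bfun (n : nat) (adj : rel 'I_n) (a : 'I_n -> 'I_n -> R)
  (x : 'I_n -> R) : R :=
  \big[Rplus/R0]_(i < n) \big[Rplus/R0]_(j < n | (i < j)%N && adj i j)
     (Rmult (Rmult (a i j) (x i)) (x j)).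

Definition inQ (n : nat) (adj : rel 'I_n) (a : 'I_n -> 'I_n -> R)
  (x : 'I_n -> R) (z : R) : Prop :=
  in_box x /\
  exists y : 'I_n -> 'I_n -> R,
    (forall i j : 'I_n, (i < j)%N -> adj i j ->
       (Rle 0 (y i j) /\ Rle (y i j) 1) /\ Rle (y i j) (x i) /\ Rle (y i j) (x j) /\
       Rle (Rminus (Rplus (x i) (x j)) 1) (y i j)) /\
    z = \big[Rplus/R0]_(i < n) \big[Rplus/R0]_(j < n | (i < j)%N && adj i j)
          (Rmult (a i j) (y i j)).

Definition inConvB (n : nat) (adj : rel 'I_n) (a : 'I_n -> 'I_n -> R)
  (x : 'I_n -> R) (z : R) : Prop :=
  exists (m : nat) (lam : 'I_m -> R) (p : 'I_m -> 'I_n -> R),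
    (forall k, Rle 0 (lam k)) /\
    \big[Rplus/R0]_(k < m) lam k = R1 /\
    (forall k, in_box (p k)) /\
    (forall i, x i = \big[Rplus/R0]_(k < m) (Rmult (lam k) (p k i))) /\
    z = \big[Rplus/R0]_(k < m) (Rmult (lam k) (bfun adj a (p k))).

Definition posb (r : R) : bool := if Rlt_dec 0 r then true else false.
Definition negb_R (r : R) : bool := if Rlt_dec r 0 then true else false.

(* The edges of the cycle s are zip s (rot 1 s). *)
Definition even_sign_cycles (n : nat) (adj : rel 'I_n)
  (a : 'I_n -> 'I_n -> R) : Prop :=
  forall s : seq 'I_n, (2 < size s)%N -> uniq s -> cycle adj s ->
    ~~ odd (count (fun e => posb (a e.1 e.2)) (zip s (rot 1 s))) /\
    ~~ odd (count (fun e => negb_R (a e.1 e.2)) (zip s (rot 1 s))).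

(* The inclusion conv(B) ⊆ Q always holds: the McCormick inequalities are valid on B.
   If every cycle has an even number of positive edges, the positive edges are exactly
   the edges crossing a cut o1 of G, and likewise the negative edges cross a cut o2.
   Given x, take the comonotone (threshold) coupling of 0/1 points with marginals x after
   flipping the coordinates on one side of a cut: its moments E[p_i p_j] sit on the lower
   McCormick bound max(0, x_i + x_j - 1) across the cut and on the upper bound
   min(x_i, x_j) within a side.  So the coupling along o1 yields a point of conv(B) over x
   with value at most z, the one along o2 a point with value at least z, and a mixture of
   the two yields (x, z).
   Conversely, on a cycle with an odd number of positive edges, x = 1/2 on the cycle lifts
   to a point of Q at which a sum of affine minorants of the edge terms a_ij x_i x_j is
   tight.  A convex combination of points of B representing it would be tight at each
   point, forcing the positive cycle edges to be exactly the sign changes of a 0/1 vector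
   along the cycle, of which there is an even number.  Negative edges are handled by
   replacing a with -a. *)

From Stdlib Require Import Reals Lra Lia.
From HB Require Import structures.
From mathcomp Require Import all_boot zify.

Set Implicit Arguments.
Unset Strict Implicit.
Unset Printing Implicit Defensive.

(** * Closed walks, cycles and cuts *)

Lemma zip_cons_rcons (T : Type) (x y : T) (p : seq T) :
  zip (x :: p) (rcons p y) = zip (x :: rcons p y) (rcons p y).
Proof. by elim: p x => [|z p IHp] x //=; rewrite IHp. Qed.

Section ClosedWalks.

Variables (T : eqType) (e c : rel T).

Definition path_count (x : T) (p : seq T) : nat :=
  count (fun st => c st.1 st.2) (zip (x :: p) p).

Lemma path_count_cons x y p : path_count x (y :: p) = c x y + path_count y p.
Proof. by []. Qed.

Lemma path_count_cat x p q :
  path_count x (p ++ q) = path_count x p + path_count (last x p) q.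
Proof. by elim: p x => [|y p IHp] x //=; rewrite !path_count_cons IHp addnA. Qed.

Lemma cycle_count_path_count x p :
  count (fun st => c st.1 st.2) (zip (x :: p) (rot 1 (x :: p)))
  = path_count x (rcons p x).
Proof. by rewrite rot1_cons zip_cons_rcons. Qed.

Lemma not_uniq_cat_cons (s : seq T) :
  ~~ uniq s -> exists p1 v p2 p3, s = p1 ++ v :: p2 ++ v :: p3.
Proof.
elim: s => [|y s IHs] //=; rewrite negb_and negbK => /orP[ys | /IHs].
  by case/splitPr: ys => p2 p3; exists [::], y, p2, p3.
by case=> p1 [v [p2 [p3 ->]]]; exists (y :: p1), v, p2, p3.
Qed.

Lemma path_step_mem x p st : path e x p -> st \in zip (x :: p) p ->
  [/\ e st.1 st.2, st.1 \in x :: p & st.2 \in p].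
Proof.
elim: p x => [|y p IHp] x // /andP[exy yp].
rewrite [zip _ _]/= in_cons => /orP[/eqP -> | ]; first by rewrite /= exy eqxx mem_head.
by case/(IHp _ yp) => e12 in1 in2; split=> //; rewrite in_cons; apply/orP; right.
Qed.

Lemma cycle_step_mem s st : cycle e s -> st \in zip s (rot 1 s) ->
  [/\ e st.1 st.2, st.1 \in s & st.2 \in s].
Proof.
case: s => [|x p] //= xp; rewrite rot1_cons zip_cons_rcons.
case/(path_step_mem xp) => e12 in1; rewrite mem_rcons => in2; split=> //.
by move: in1; rewrite !in_cons mem_rcons in_cons => /orP[-> | /orP[-> | ->]]; rewrite ?orbT.
Qed.

Hypotheses (e_irr : irreflexive e) (c_sym : forall u v, e u v -> c u v = c v u).
Hypothesis even_cycles : forall s : seq T, (2 < size s)%N -> uniq s -> cycle e s ->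
  ~~ odd (count (fun st => c st.1 st.2) (zip s (rot 1 s))).

(* A closed walk without repeated vertices is a cycle or runs back and forth along one
   edge; otherwise it splits into two shorter closed walks. *)
Lemma closed_walk_count_even x p :
  path e x p -> last x p = x -> ~~ odd (path_count x p).
Proof.
elim: {p}(size p).+1 {-2}p (ltnSn (size p)) x => // N IHN p ltpN x xp xpx.
have [up | /not_uniq_cat_cons[p1 [v [p2 [p3 def_p]]]]] := boolP (uniq p).
  case/lastP: p ltpN xp xpx up => [|t y] // _ + + up; rewrite last_rcons => xp yx; subst y.
  case: t xp up => [|w [|w' t]] xp up; first by move: xp => /= /andP[]; rewrite e_irr.
    case/andP: xp => exw _.
    by rewrite !path_count_cons (c_sym exw) addn0 oddD addbb.
  by rewrite -cycle_count_path_count; apply: even_cycles => //; rewrite rcons_uniq in up.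
move: xp xpx; rewrite def_p cat_path last_cat => /andP[xp1 /= /andP[e1]].
rewrite cat_path last_cat /= => /andP[vp2 /= /andP[e2 vp3]] v3x.
have loop : ~~ odd (path_count v (p2 ++ [:: v])).
  apply: IHN; rewrite ?cat_path ?vp2 ?last_cat //= ?e2 //.
  by move: ltpN; rewrite def_p !size_cat /= !size_cat /=; lia.
have rest : ~~ odd (path_count x (p1 ++ v :: p3)).
  apply: IHN; rewrite ?cat_path ?xp1 ?last_cat //= ?e1 //.
  by move: ltpN; rewrite def_p !size_cat /= !size_cat /=; lia.
move: loop rest; rewrite !(path_count_cat, path_count_cons) /= !addn0 !oddD !oddb.
by case: (odd (path_count x p1)) (c (last x p1) v) (odd (path_count v p2))
  (c (last v p2) v) (odd (path_count v p3)) => [] [] [] [] [].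
Qed.

End ClosedWalks.

Section CutLabeling.

Variables (T : finType) (e c : rel T).

Definition parity_cover : rel (T * bool) :=
  fun u v => e u.1 v.1 && (v.2 == u.2 (+) c u.1 v.1).

Lemma parity_cover_path u b P :
  path parity_cover (u, b) P ->
  path e u (map fst P) /\ (last (u, b) P).2 = b (+) odd (path_count c u (map fst P)).
Proof.
elim: P u b => [|[w b'] P IHP] u b /=; first by rewrite addbF.
case/andP=> /andP[/= euw /eqP /= ->] /IHP[wP ->]; split; first by rewrite euw.
by rewrite path_count_cons oddD oddb addbA.
Qed.

Lemma parity_cover_lift r b p :
  path e r p -> exists b', connect parity_cover (r, b) (last r p, b').
Proof.
elim: p r b => [|y p IHp] r b /=; first by exists b; apply: connect0.
case/andP=> ery /(IHp _ (b (+) c r y))[b' yb']; exists b'.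
by apply: connect_trans yb'; apply: connect1; rewrite /parity_cover /= ery eqxx.
Qed.

Hypotheses (e_sym : symmetric e) (e_irr : irreflexive e).
Hypothesis c_sym : forall u v, e u v -> c u v = c v u.
Hypothesis even_cycles : forall s : seq T, (2 < size s)%N -> uniq s -> cycle e s ->
  ~~ odd (count (fun st => c st.1 st.2) (zip s (rot 1 s))).

Lemma parity_cover_sheets_apart w :
  ~~ connect parity_cover (w, false) (w, true).
Proof.
apply/negP => /connectP[P /parity_cover_path[wP] + last_P].
rewrite -last_P /= => odd_wP.
have last_wP : last w (map fst P) = w by rewrite -[w in last w]/((w, false).1) last_map -last_P.
by have := closed_walk_count_even e_irr c_sym even_cycles wP last_wP; rewrite -odd_wP.
Qed.

(* Label v by whether (v, true) is reachable from (root v, false) in the parity double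
   cover; as closed walks are even, exactly one of the two sheets over v is reachable. *)
Lemma even_cycles_cut : exists o : T -> bool, forall u v, e u v -> c u v = (o u != o v).
Proof.
have cover_sym : connect_sym parity_cover.
  apply: sym_connect_sym => -[u b] [v b']; rewrite /parity_cover /= e_sym.
  by case euv: (e v u); rewrite //= (c_sym euv); case: b; case: b'; case: (c u v).
pose o v := connect parity_cover (root e v, false) (v, true).
exists o => u v euv; rewrite /o.
have <- : root e u = root e v by apply/(rootP (sym_connect_sym e_sym)); apply: connect1.
set r := root e u.
have one_sheet w : connect e r w ->
    connect parity_cover (r, false) (w, true) = ~~ connect parity_cover (r, false) (w, false).
  case/connectP=> p rp ->; have [b' rb'] := parity_cover_lift false rp.
  case rw: (connect parity_cover (r, false) (last r p, false)).
    apply/negP => rw'; apply: (negP (parity_cover_sheets_apart (last r p))).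
    by apply: connect_trans rw'; rewrite cover_sym.
  by case: b' rb' rw => // ->.
have step b : connect parity_cover (r, false) (u, b)
            = connect parity_cover (r, false) (v, b (+) c u v).
  by apply: (same_connect_r cover_sym); apply: connect1; rewrite /parity_cover /= euv eqxx.
have rv : connect e r v.
  by apply: connect_trans (connect1 euv); rewrite (sym_connect_sym e_sym) connect_root.
case: (c u v) (step true) => /= ->; last by rewrite eqxx.
by rewrite one_sheet //; case: connect.
Qed.

End CutLabeling.

Lemma path_count_cut_odd (T : eqType) (o : T -> bool) x p :
  odd (path_count (fun u v => o u != o v) x p) = (o x != o (last x p)).
Proof.
elim: p x => [|y p IHp] x /=; first by rewrite eqxx.
by rewrite path_count_cons oddD oddb IHp; case: (o x); case: (o y); case: (o (last y p)).
Qed.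

Lemma cut_count_even (T : eqType) (o : T -> bool) (s : seq T) :
  ~~ odd (count (fun st => o st.1 != o st.2) (zip s (rot 1 s))).
Proof.
case: s => [|x p] //.
by rewrite (cycle_count_path_count (fun u v => o u != o v)) path_count_cut_odd last_rcons eqxx.
Qed.

HB.instance Definition _ := Monoid.isComLaw.Build R R0 Rplus
  (fun x y z => esym (Rplus_assoc x y z)) Rplus_comm Rplus_0_l.
HB.instance Definition _ := Monoid.isMulLaw.Build R R0 Rmult Rmult_0_l Rmult_0_r.
HB.instance Definition _ :=
  Monoid.isAddLaw.Build R Rmult Rplus Rmult_plus_distr_r Rmult_plus_distr_l.

Local Open Scope R_scope.

Local Notation "\sum_ ( i <- r | P ) F" := (\big[Rplus/R0]_(i <- r | P) F) : R_scope.
Local Notation "\sum_ ( i < n | P ) F" := (\big[Rplus/R0]_(i < n | P) F) : R_scope.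
Local Notation "\sum_ ( i < n ) F" := (\big[Rplus/R0]_(i < n) F) : R_scope.
Local Notation "\sum_ ( i | P ) F" := (\big[Rplus/R0]_(i | P) F) : R_scope.

Lemma Rsum_le (I : Type) (r : seq I) (P : pred I) (F G : I -> R) :
  (forall i, P i -> F i <= G i) -> \sum_(i <- r | P i) F i <= \sum_(i <- r | P i) G i.
Proof. by move=> FG; apply: (big_ind2 Rle) => //; [apply: Rle_refl | apply: Rplus_le_compat]. Qed.

Lemma Rsum_ge0 (I : Type) (r : seq I) (P : pred I) (F : I -> R) :
  (forall i, P i -> 0 <= F i) -> 0 <= \sum_(i <- r | P i) F i.
Proof. by move=> F0; apply: (big_ind (Rle 0)) => // [|x y]; lra. Qed.

Lemma Rsum_eq0_ge0 (I : finType) (P : pred I) (F : I -> R) :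
  (forall i, P i -> 0 <= F i) -> \sum_(i | P i) F i = 0 -> forall i, P i -> F i = 0.
Proof.
move=> F0 sum0 i Pi; move: sum0; rewrite (bigD1 i Pi) /=.
have : 0 <= \sum_(j | P j && (j != i)) F j by apply: Rsum_ge0 => j /andP[/F0].
by have := F0 i Pi; lra.
Qed.

Lemma Rsum_opp (I : Type) (r : seq I) (P : pred I) (F : I -> R) :
  - \sum_(i <- r | P i) F i = \sum_(i <- r | P i) - F i.
Proof. exact: (big_morph Ropp Ropp_plus_distr Ropp_0). Qed.

Lemma posbP r : reflect (0 < r) (posb r).
Proof. by rewrite /posb; case: Rlt_dec => h; constructor. Qed.

Lemma negb_RP r : reflect (r < 0) (negb_R r).
Proof. by rewrite /negb_R; case: Rlt_dec => h; constructor. Qed.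

Lemma posb_opp r : posb (- r) = negb_R r.
Proof. by apply/posbP/negb_RP; lra. Qed.

Section Averages.

Variable m : nat.
Implicit Types (lam f g : 'I_m -> R).

Definition weights lam : Prop := (forall k, 0 <= lam k) /\ \sum_(k < m) lam k = 1.

Definition avg lam f : R := \sum_(k < m) lam k * f k.

Lemma avg_affine lam f g A B C : \sum_(k < m) lam k = 1 ->
  avg lam (fun k => A + B * f k + C * g k) = A + B * avg lam f + C * avg lam g.
Proof.
move=> lam1; rewrite /avg -{2}(Rmult_1_r A) -lam1 !big_distrr -!big_split /=.
by apply: eq_bigr => k _; ring.
Qed.

Lemma avg_cst lam A : \sum_(k < m) lam k = 1 -> avg lam (fun _ => A) = A.
Proof. by move=> lam1; rewrite /avg -big_distrl lam1 /=; ring. Qed.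

Lemma avgN lam f : avg lam (fun k => - f k) = - avg lam f.
Proof. by rewrite /avg Rsum_opp; apply: eq_bigr => k _; ring. Qed.

Lemma avgB lam f g : avg lam (fun k => f k - g k) = avg lam f - avg lam g.
Proof.
rewrite /avg /Rminus Rsum_opp -big_split /=.
by apply: eq_bigr => k _; ring.
Qed.

Lemma avgZ lam c f : avg lam (fun k => c * f k) = c * avg lam f.
Proof. by rewrite /avg big_distrr /=; apply: eq_bigr => k _; ring. Qed.

Lemma avg_le lam f g : (forall k, 0 <= lam k) -> (forall k, f k <= g k) -> avg lam f <= avg lam g.
Proof. by move=> lam0 fg; apply: Rsum_le => k _; apply: Rmult_le_compat_l. Qed.

Lemma avg_ge0 lam f : (forall k, 0 <= lam k) -> (forall k, 0 <= f k) -> 0 <= avg lam f.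
Proof. by move=> lam0 f0; apply: Rsum_ge0 => k _; apply: Rmult_le_pos. Qed.

Lemma avg_eq0_ge0 lam f : (forall k, 0 <= lam k) -> (forall k, 0 <= f k) ->
  avg lam f = 0 -> forall k, 0 < lam k -> f k = 0.
Proof.
move=> lam0 f0 avg0 k lam_k.
have /Rmult_integral : lam k * f k = 0.
  by apply: (Rsum_eq0_ge0 _ avg0) => // j _; apply: Rmult_le_pos.
by case=> //; lra.
Qed.

Lemma weights_pos lam : \sum_(k < m) lam k = 1 -> exists k, 0 < lam k.
Proof.
move=> lam1; case: (pickP (fun k => posb (lam k))) => [k /posbP | lam_le0]; first by exists k.
have : \sum_(k < m) lam k <= \sum_(k < m) 0.
  by apply: Rsum_le => k _; apply: Rnot_lt_le => /posbP; rewrite lam_le0.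
by rewrite big1_eq lam1; lra.
Qed.

End Averages.

Section Mixtures.

Variables (m1 m2 : nat) (t : R) (l1 : 'I_m1 -> R) (l2 : 'I_m2 -> R).

Definition mix_weights (k : 'I_(m1 + m2)) : R :=
  match split k with inl i => t * l1 i | inr j => (1 - t) * l2 j end.

Definition mix_points (T : Type) (p1 : 'I_m1 -> T) (p2 : 'I_m2 -> T) (k : 'I_(m1 + m2)) : T :=
  match split k with inl i => p1 i | inr j => p2 j end.

Lemma avg_mix (T : Type) (p1 : 'I_m1 -> T) (p2 : 'I_m2 -> T) (H : T -> R) :
  avg mix_weights (fun k => H (mix_points p1 p2 k))
  = t * avg l1 (fun i => H (p1 i)) + (1 - t) * avg l2 (fun j => H (p2 j)).
Proof.
rewrite /avg big_split_ord !big_distrr /mix_weights /mix_points /=.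
congr (_ + _); apply: eq_bigr => i _.
  by rewrite (unsplitK (inl i : 'I_m1 + 'I_m2)); ring.
by rewrite (unsplitK (inr i : 'I_m1 + 'I_m2)); ring.
Qed.

Lemma weights_mix : 0 <= t <= 1 -> weights l1 -> weights l2 -> weights mix_weights.
Proof.
move=> t01 [l1_ge0 l1_sum] [l2_ge0 l2_sum]; split.
  by move=> k; rewrite /mix_weights; case: split => i;
    [have := l1_ge0 i | have := l2_ge0 i]; nra.
have := avg_mix (fun _ : 'I_m1 => tt) (fun _ : 'I_m2 => tt) (fun _ => 1).
rewrite (avg_cst _ l1_sum) (avg_cst _ l2_sum) /avg => mix1.
by rewrite (eq_bigr _ (fun k _ => esym (Rmult_1_r (mix_weights k)))) mix1; ring.
Qed.

End Mixtures.

Section EdgeSums.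

Variables (n : nat) (adj : rel 'I_n).
Implicit Types (F G : 'I_n -> 'I_n -> R).

Definition edge_sum F : R := \sum_(i < n) \sum_(j < n | (i < j)%N && adj i j) F i j.

Lemma bfun_edge_sum a x : bfun adj a x = edge_sum (fun i j => a i j * x i * x j).
Proof. by []. Qed.

Lemma eq_edge_sum F G : (forall i j, F i j = G i j) -> edge_sum F = edge_sum G.
Proof. by move=> FG; apply: eq_bigr => i _; apply: eq_bigr => j _. Qed.

Lemma edge_sum_le F G : (forall i j : 'I_n, (i < j)%N -> adj i j -> F i j <= G i j) ->
  edge_sum F <= edge_sum G.
Proof. by move=> FG; apply: Rsum_le => i _; apply: Rsum_le => j /andP[]; apply: FG. Qed.

Lemma edge_sum_eq0_ge0 F : (forall i j : 'I_n, (i < j)%N -> adj i j -> 0 <= F i j) ->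
  edge_sum F = 0 -> forall i j : 'I_n, (i < j)%N -> adj i j -> F i j = 0.
Proof.
move=> F0 sum0 i j ij aij.
have rows0 (i' : 'I_n) : 0 <= \sum_(j' < n | (i' < j')%N && adj i' j') F i' j'.
  by apply: Rsum_ge0 => j' /andP[]; apply: F0.
have /Rsum_eq0_ge0 row0 := Rsum_eq0_ge0 (fun i' _ => rows0 i') sum0 (i := i) isT.
by apply: row0; [move=> j' /andP[]; apply: F0 | rewrite ij aij].
Qed.

Lemma edge_sum_opp F : - edge_sum F = edge_sum (fun i j => - F i j).
Proof. by rewrite /edge_sum Rsum_opp; apply: eq_bigr => i _; rewrite Rsum_opp. Qed.

Lemma edge_sumB F G : edge_sum (fun i j => F i j - G i j) = edge_sum F - edge_sum G.
Proof.
rewrite /Rminus edge_sum_opp /edge_sum -big_split /=.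
by apply: eq_bigr => i _; rewrite -big_split.
Qed.

Lemma avg_edge_sum m (lam : 'I_m -> R) (F : 'I_m -> 'I_n -> 'I_n -> R) :
  avg lam (fun k => edge_sum (F k)) = edge_sum (fun i j => avg lam (fun k => F k i j)).
Proof.
rewrite /avg /edge_sum; under eq_bigr do rewrite big_distrr.
rewrite exchange_big; apply: eq_bigr => i _; under eq_bigr do rewrite big_distrr.
by rewrite exchange_big.
Qed.

Lemma avg_bfun a m (lam : 'I_m -> R) (p : 'I_m -> 'I_n -> R) :
  avg lam (fun k => bfun adj a (p k))
  = edge_sum (fun i j => a i j * avg lam (fun k => p k i * p k j)).
Proof.
transitivity (avg lam (fun k => edge_sum (fun i j => a i j * (p k i * p k j)))).
  by apply: eq_bigr => k _; congr (_ * _); apply: eq_edge_sum => i j; ring.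
by rewrite avg_edge_sum; apply: eq_edge_sum => i j; apply: avgZ.
Qed.

End EdgeSums.

(** * Comonotone couplings *)

Lemma exists_argmin (T : eqType) (s : seq T) (f : T -> R) :
  s != [::] -> exists2 x, x \in s & forall y, y \in s -> f x <= f y.
Proof.
elim: s => [|x [|x' s] IHs] // _.
  by exists x => [|y]; rewrite ?mem_seq1 // => /eqP ->; apply: Rle_refl.
have [w ws w_min] := IHs isT.
case: (Rle_dec (f x) (f w)) => [xw | /Rnot_le_lt wx].
  exists x => [|y]; first exact: mem_head.
  by rewrite in_cons => /orP[/eqP -> | /w_min]; lra.
exists w => [|y]; first by rewrite in_cons ws orbT.
by rewrite in_cons => /orP[/eqP -> | /w_min]; lra.
Qed.

Section Comonotone.

Variable n : nat.
Implicit Type z : 'I_n -> R.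

Definition comonotone_decomposition z m (lam : 'I_m -> R) (q : 'I_m -> 'I_n -> R) : Prop :=
  [/\ weights lam, forall k v, q k v = 0 \/ q k v = 1,
      forall v, avg lam (fun k => q k v) = z v
    & forall k u v, z u <= z v -> q k u <= q k v].

Lemma comonotone_decomposition_bits z : (forall v, z v = 0 \/ z v = 1) ->
  comonotone_decomposition z (fun _ : 'I_1 => 1) (fun _ => z).
Proof.
move=> z01; split=> //.
- by split=> [_|]; rewrite ?big_ord1; lra.
- by move=> v; rewrite /avg big_ord1; ring.
Qed.

Definition positives z : nat := #|[pred v | posb (z v)]|.

Definition peel z (mu : R) (v : 'I_n) : R :=
  if posb (z v) then (z v - mu) / (1 - mu) else 0.

Section Peel.

Variables (z : 'I_n -> R) (mu : R).
Hypotheses (z_box : in_box z) (mu01 : 0 < mu < 1).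
Hypothesis mu_min : forall v, 0 < z v -> mu <= z v.

Lemma peel_box : in_box (peel z mu).
Proof.
move=> v; rewrite /peel /Rdiv; case: posbP => [/mu_min z_v | _]; last lra.
have inv_pos : 0 < / (1 - mu) by apply: Rinv_0_lt_compat; lra.
have inv_eq : (1 - mu) * / (1 - mu) = 1 by field; lra.
by have := z_box v; split; nra.
Qed.

Lemma peel_mono u v : z u <= z v -> peel z mu u <= peel z mu v.
Proof.
move=> zuv; rewrite /peel; case: posbP => [z_u | _]; last by have [] := peel_box v.
case: posbP => [_ | /Rnot_lt_le]; last lra.
by apply: Rmult_le_compat_r; [apply/Rlt_le/Rinv_0_lt_compat |]; lra.
Qed.

Lemma peel_decomp v : z v = mu * (if posb (z v) then 1 else 0) + (1 - mu) * peel z mu v.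
Proof.
rewrite /peel; case: posbP => [_ | /Rnot_lt_le z_v]; first by field; lra.
by have := z_box v; lra.
Qed.

Lemma peel_positives v0 : z v0 = mu -> (positives (peel z mu) < positives z)%N.
Proof.
move=> z_v0; have pos_v0 : posb (z v0) by apply/posbP; lra.
apply/proper_card/properP; split.
  by apply/subsetP => v; rewrite !inE /peel; case: (posb (z v)) => // /posbP; lra.
exists v0; rewrite !inE // /peel pos_v0 z_v0 Rminus_diag /Rdiv Rmult_0_l.
by apply/posbP; lra.
Qed.

End Peel.

(* Peel off the lowest positive level: z = mu * [z > 0] + (1 - mu) * peel z mu. *)
Lemma exists_comonotone_decomposition z :
  in_box z -> exists m (lam : 'I_m -> R) q, comonotone_decomposition z lam q.
Proof.
move: {2}(positives z).+1 (ltnSn (positives z)) => N; elim: N z => // N IHN z zN z_box.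
have [vf /andP[/posbP zf_gt0 /posbP zf_lt1] | no_frac] :=
  pickP [pred v | posb (z v) && posb (1 - z v)]; last first.
  exists 1%N, (fun _ => 1), (fun _ => z); apply: comonotone_decomposition_bits => v.
  have := z_box v; have := no_frac v => /=.
  by case: posbP => [?|/Rnot_lt_le ?]; case: posbP => [?|/Rnot_lt_le ?] //= _; lra.
have vf_pos : vf \in enum [pred v | posb (z v)] by rewrite mem_enum inE; apply/posbP.
have [|v0 /[!mem_enum] /posbP z_v0 v0_min] := exists_argmin z (s := enum [pred v | posb (z v)]).
  by case: (enum _) vf_pos.
have mu_min v : 0 < z v -> z v0 <= z v by move/posbP=> z_v; apply: v0_min; rewrite mem_enum.
have mu01 : 0 < z v0 < 1 by have := mu_min _ zf_gt0; lra.
have [m [lam [q [lam_w q01 q_avg q_mono]]]] : exists m (lam : 'I_m -> R) q,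
    comonotone_decomposition (peel z (z v0)) lam q.
  apply: IHN; last exact: peel_box.
  by have := peel_positives mu01 (erefl (z v0)); lia.
pose q0 v := if posb (z v) then 1 else 0.
exists (1 + m)%N, (mix_weights (z v0) (fun _ : 'I_1 => 1) lam), (mix_points (fun _ => q0) q).
split.
- apply: weights_mix; [lra | | exact: lam_w].
  by split=> [_|]; rewrite ?big_ord1; lra.
- by move=> k v; rewrite /mix_points; case: split => i //; rewrite /q0; case: posb; [right|left].
- move=> v; rewrite (avg_mix _ _ _ _ _ (fun p : 'I_n -> R => p v)) q_avg /avg big_ord1.
  by rewrite [RHS](peel_decomp z_box mu01) /q0; ring.
- move=> k u v zuv; rewrite /mix_points; case: split => i; last exact/q_mono/peel_mono.
  rewrite /q0; case: posbP => [z_u|]; case: posbP => [|/Rnot_lt_le]; lra.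
Qed.

End Comonotone.

Definition flip (b : bool) (r : R) : R := if b then 1 - r else r.

Lemma flipK b : involutive (flip b).
Proof. by case: b => r /=; ring. Qed.

Lemma avg_flip m (lam : 'I_m -> R) b f : \sum_(k < m) lam k = 1 ->
  avg lam (fun k => flip b (f k)) = flip b (avg lam f).
Proof.
case: b => lam1 /=; last by [].
transitivity (avg lam (fun k => 1 + -1 * f k + 0 * f k)).
  by apply: eq_bigr => k _; ring.
by rewrite avg_affine //; ring.
Qed.

Lemma flip_mul_bits bi bj qi qj : qi = 0 \/ qi = 1 -> qj = 0 \/ qj = 1 -> qi <= qj ->
  flip bi qi * flip bj qj =
    match bi, bj with
    | false, false => qi | true, true => 1 - qj | false, true => 0 | true, false => qj - qi
    end.
Proof. by case: bi; case: bj => /=; case=> ->; case=> ->; lra. Qed.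

(* Flipping the coordinates on one side of the cut turns a comonotone coupling into
   one that is comonotone within each side and countermonotone across the cut. *)
Lemma cut_coupling n (x : 'I_n -> R) (o : 'I_n -> bool) : in_box x ->
  exists m (lam : 'I_m -> R) (p : 'I_m -> 'I_n -> R),
  [/\ weights lam, forall k, in_box (p k), forall v, x v = avg lam (fun k => p k v)
    & forall i j, avg lam (fun k => p k i * p k j)
        = if o i == o j then Rmin (x i) (x j) else Rmax 0 (x i + x j - 1)].
Proof.
move=> x_box; pose z v := flip (o v) (x v).
have z_box : in_box z by move=> v; rewrite /z; case: (o v) => /=; have := x_box v; lra.
have [m [lam [q [[lam0 lam1] q01 q_avg q_mono]]]] := exists_comonotone_decomposition z_box.
have x_z v : x v = flip (o v) (z v) by rewrite flipK.
exists m, lam, (fun k v => flip (o v) (q k v)); split=> //.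
- by move=> k v; case: (o v) (q01 k v) => /= -[] ->; lra.
- by move=> v; rewrite avg_flip // q_avg.
have coupling i j : z i <= z j -> avg lam (fun k => flip (o i) (q k i) * flip (o j) (q k j))
    = if o i == o j then Rmin (x i) (x j) else Rmax 0 (x i + x j - 1).
  move=> zij; rewrite /avg.
  under eq_bigr => k _ do rewrite (flip_mul_bits _ _ (q01 k i) (q01 k j) (q_mono k i j zij)).
  rewrite -/(avg _ _) !x_z.
  case: (o i); case: (o j) => /=; rewrite ?avgB ?avg_cst ?avg_flip // ?q_avg /=.
  - by rewrite Rmin_right //; lra.
  - by rewrite Rmax_right //; lra.
  - by rewrite Rmax_left //; lra.
  - by rewrite Rmin_left.
move=> i j; have [zij | /Rlt_le zji] := Rle_lt_dec (z i) (z j); first exact: coupling.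
rewrite eq_sym Rmin_comm Rplus_comm -(coupling j i zji) /avg.
by apply: eq_bigr => k _; rewrite (Rmult_comm (flip (o i) _)).
Qed.

(** * The McCormick relaxation and the convex hull of B *)

Lemma Rbetween_convex z1 z2 z :
  z1 <= z <= z2 -> exists2 t, 0 <= t <= 1 & z = t * z1 + (1 - t) * z2.
Proof.
move=> z12; have [lt12 | ?] := Rlt_le_dec z1 z2; last by exists 1; lra.
have inv_pos : 0 < / (z2 - z1) by apply: Rinv_0_lt_compat; lra.
have inv_eq : (z2 - z1) * / (z2 - z1) = 1 by field; lra.
by exists ((z2 - z) / (z2 - z1)); [split; rewrite /Rdiv; nra | field; lra].
Qed.

Section ConvexHull.

Variables (n : nat) (adj : rel 'I_n) (a : 'I_n -> 'I_n -> R).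

Lemma inConvBE x z : inConvB adj a x z <->
  exists m (lam : 'I_m -> R) (p : 'I_m -> 'I_n -> R),
  [/\ weights lam, forall k, in_box (p k), forall v, x v = avg lam (fun k => p k v)
    & z = avg lam (fun k => bfun adj a (p k))].
Proof.
split=> [[m [lam [p [lam0 [lam1 [p_box [x_avg z_avg]]]]]]] | [m [lam [p [[? ?] ? ? ?]]]]].
  by exists m, lam, p.
by exists m, lam, p; split; [|split; [|split; [|split]]].
Qed.

Lemma inConvB_inQ x z : inConvB adj a x z -> inQ adj a x z.
Proof.
case/inConvBE=> m [lam [p [[lam0 lam1] p_box x_avg ->]]].
have avg01 f : (forall k, 0 <= f k <= 1) -> 0 <= avg lam f <= 1.
  move=> f01; rewrite -[X in X <= _ <= _](avg_cst 0 lam1) -[X in _ <= _ <= X](avg_cst 1 lam1).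
  by split; apply: avg_le => // k; have := f01 k; lra.
split; first by move=> i; rewrite x_avg; apply: avg01 => k; apply: p_box.
exists (fun i j => avg lam (fun k => p k i * p k j)); split; last exact: avg_bfun.
move=> i j _ _; have [pi pj] := (p_box^~ i, p_box^~ j).
have -> : x i + x j - 1 = avg lam (fun k => -1 + 1 * p k i + 1 * p k j).
  by rewrite avg_affine // -!x_avg; ring.
rewrite !x_avg; split; first by apply: avg01 => k; have := pi k; have := pj k; split; nra.
by split; [|split]; apply: avg_le => // k; have := pi k; have := pj k; nra.
Qed.

Lemma inConvB_between x z1 z2 z :
  inConvB adj a x z1 -> inConvB adj a x z2 -> z1 <= z <= z2 -> inConvB adj a x z.
Proof.
move=> /inConvBE[m1 [l1 [p1 [l1_w p1_box x1 z1E]]]] /inConvBE[m2 [l2 [p2 [l2_w p2_box x2 z2E]]]].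
case/Rbetween_convex=> t t01 zE; apply/inConvBE.
exists (m1 + m2)%N, (mix_weights t l1 l2), (mix_points p1 p2); split.
- exact: weights_mix.
- by move=> k; rewrite /mix_points; case: split.
- by move=> v; rewrite (avg_mix _ _ _ _ _ (fun q : 'I_n -> R => q v)) -x1 -x2; ring.
- by rewrite avg_mix -z1E -z2E.
Qed.

Lemma mccormick_cut_le A xi xj y (same : bool) :
  0 <= y -> y <= xi -> y <= xj -> xi + xj - 1 <= y -> posb A = ~~ same ->
  A * (if same then Rmin xi xj else Rmax 0 (xi + xj - 1)) <= A * y.
Proof.
move=> y0 yi yj y_lo; case: posbP => [A_pos /esym/negPf | /Rnot_lt_le A_le0 /esym/negbFE] ->.
  by apply: Rmult_le_compat_l; [lra | apply: Rmax_lub].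
by apply: Rmult_le_compat_neg_l; [| apply: Rmin_glb].
Qed.

(* The coupling along the cut o1 of the positive edges keeps b below the McCormick
   value z, the one along the cut o2 of the negative edges keeps it above. *)
Lemma inQ_inConvB (o1 o2 : 'I_n -> bool) :
  (forall i j, adj i j -> posb (a i j) = (o1 i != o1 j)) ->
  (forall i j, adj i j -> negb_R (a i j) = (o2 i != o2 j)) ->
  forall x z, inQ adj a x z -> inConvB adj a x z.
Proof.
move=> cut1 cut2 x z [x_box [y [y_mc ->]]].
have [m1 [l1 [p1 [l1_w p1_box x1 E1]]]] := cut_coupling o1 x_box.
have [m2 [l2 [p2 [l2_w p2_box x2 E2]]]] := cut_coupling o2 x_box.
apply: (@inConvB_between _ (avg l1 (fun k => bfun adj a (p1 k)))
                           (avg l2 (fun k => bfun adj a (p2 k)))).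
- by apply/inConvBE; exists m1, l1, p1.
- by apply/inConvBE; exists m2, l2, p2.
rewrite !avg_bfun; split; apply: edge_sum_le => i j ij aij;
  have [[y0 _] [yi [yj y_lo]]] := y_mc i j ij aij.
  by rewrite E1; apply: mccormick_cut_le; rewrite // cut1 // negbK.
apply: Ropp_le_cancel; rewrite E2 !Ropp_mult_distr_l.
by apply: mccormick_cut_le; rewrite // posb_opp cut2 // negbK.
Qed.

End ConvexHull.

(** * Odd cycles *)

(* An affine minorant of A qi qj on the unit square: the mean of the two McCormick
   underestimators when both vertices lie on the cycle, one of them otherwise. *)
Definition affine_minorant (A : R) (inI inJ : bool) (qi qj : R) : R :=
  (if inI && inJ && posb A then - (A / 2) else 0)
  + (if inI && inJ then A / 2 else if posb A || inI then 0 else A) * qi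
  + (if inI && inJ then A / 2 else if posb A || ~~ inI then 0 else A) * qj.

Lemma affine_minorant_le A inI inJ qi qj : 0 <= qi <= 1 -> 0 <= qj <= 1 ->
  affine_minorant A inI inJ qi qj <= A * (qi * qj).
Proof.
move=> qi01 qj01; rewrite /affine_minorant.
have ? : 0 <= qi * qj by nra.
have ? : 0 <= (1 - qi) * (1 - qj) by nra.
have ? : 0 <= qi * (1 - qj) by nra.
have ? : 0 <= qj * (1 - qi) by nra.
by case: inI; case: inJ; case: posbP => /= [A_pos | /Rnot_lt_le A_le0]; nra.
Qed.

Lemma avg_affine_minorant m (lam : 'I_m -> R) A inI inJ f g : \sum_(k < m) lam k = 1 ->
  avg lam (fun k => affine_minorant A inI inJ (f k) (g k))
  = affine_minorant A inI inJ (avg lam f) (avg lam g).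
Proof. exact: avg_affine. Qed.

Lemma affine_minorant_tight A qi qj : A <> 0 -> 0 <= qi <= 1 -> 0 <= qj <= 1 ->
  affine_minorant A true true qi qj = A * (qi * qj) -> posb A = (posb qi != posb qj).
Proof.
move=> A0 qi01 qj01; rewrite /affine_minorant /=.
case: posbP => [A_pos | /Rnot_lt_le A_le0] /= tight.
  have : A * (qi * qj + (1 - qi) * (1 - qj)) = 0 by nra.
  case/Rmult_integral=> [|gap0]; first lra.
  have [/Rmult_integral qiqj0 /Rmult_integral qiqj1] : qi * qj = 0 /\ (1 - qi) * (1 - qj) = 0.
    by split; nra.
  by case: qiqj0 => ?; case: qiqj1 => ?; do 2 case: posbP => ? //=; exfalso; lra.
have : A * (qi * (1 - qj) + qj * (1 - qi)) = 0 by nra.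
case/Rmult_integral=> [|gap0]; first lra.
have [/Rmult_integral qiqj0 /Rmult_integral qiqj1] : qi * (1 - qj) = 0 /\ qj * (1 - qi) = 0.
  by split; nra.
by case: qiqj0 => ?; case: qiqj1 => ?; do 2 case: posbP => ? //=; exfalso; lra.
Qed.

Section Separation.

Variables (n : nat) (adj : rel 'I_n) (a : 'I_n -> 'I_n -> R).
Hypotheses (adj_sym : symmetric adj) (adj_irr : irreflexive adj).
Hypotheses (a_sym : forall i j, a i j = a j i) (a_nz : forall i j, adj i j -> a i j <> 0).

(* The point x = 1/2 on the cycle, 0 elsewhere, with y chosen on the McCormick envelope,
   is cut off by the inequality b >= sum of the affine minorants, which is tight at (x, z). *)
Lemma odd_cycle_separates s :
  cycle adj s -> odd (count (fun st => posb (a st.1 st.2)) (zip s (rot 1 s))) ->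
  exists x z, inQ adj a x z /\ ~ inConvB adj a x z.
Proof.
move=> s_cycle s_odd.
pose x v := if v \in s then / 2 else 0.
pose y i j := if [&& i \in s, j \in s & ~~ posb (a i j)] then / 2 else 0.
pose minorant i j (q : 'I_n -> R) := affine_minorant (a i j) (i \in s) (j \in s) (q i) (q j).
have a_y i j : a i j * y i j = minorant i j x.
  rewrite /y /minorant /x /affine_minorant.
  by case: (i \in s); case: (j \in s); case: posb => /=; field.
exists x, (edge_sum adj (fun i j => a i j * y i j)); split.
  split; first by move=> v; rewrite /x; case: (v \in s); lra.
  exists y; split=> // i j _ _; rewrite /y /x.
  by case: (i \in s); case: (j \in s); case: posb => /=; lra.
case/inConvBE=> m [lam [p [[lam0 lam1] p_box x_avg z_avg]]].
have gap0 : edge_sum adj (fun i j =>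
    avg lam (fun k => a i j * (p k i * p k j) - minorant i j (p k))) = 0.
  transitivity (edge_sum adj (fun i j =>
      a i j * avg lam (fun k => p k i * p k j) - a i j * y i j)).
    apply: eq_edge_sum => i j.
    by rewrite avgB avgZ a_y /minorant avg_affine_minorant // -!x_avg.
  by rewrite edge_sumB -avg_bfun -z_avg; ring.
have [k0 lam_k0] := weights_pos lam1.
have tight (i j : 'I_n) : (i < j)%N -> adj i j ->
    minorant i j (p k0) = a i j * (p k0 i * p k0 j).
  move=> ij aij; apply/esym/Rminus_diag_uniq.
  have gap_ge0 i' j' k : 0 <= a i' j' * (p k i' * p k j') - minorant i' j' (p k).
    have := affine_minorant_le (a i' j') (i' \in s) (j' \in s) (p_box k i') (p_box k j').
    by rewrite /minorant; lra.
  apply: (avg_eq0_ge0 lam0 (gap_ge0 i j)) lam_k0.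
  apply: (edge_sum_eq0_ge0 _ gap0 ij aij) => i' j' _ aij'.
  by apply: avg_ge0 => // k; apply: gap_ge0.
pose f v := posb (p k0 v).
have cut_lt (i j : 'I_n) : (i < j)%N -> adj i j -> i \in s -> j \in s ->
    posb (a i j) = (f i != f j).
  move=> ij aij iS jS; apply: affine_minorant_tight; [exact: a_nz | exact: p_box ..|].
  by move: (tight i j ij aij); rewrite /minorant iS jS.
have cut (i j : 'I_n) : adj i j -> i \in s -> j \in s -> posb (a i j) = (f i != f j).
  move=> aij iS jS; case: (ltngtP i j) => [ij | ji | /val_inj ij]; first exact: cut_lt.
    by rewrite a_sym eq_sym cut_lt // adj_sym.
  by move: aij; rewrite ij adj_irr.
move: s_odd; rewrite (eq_in_count (a2 := fun st => f st.1 != f st.2)).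
  by rewrite (negbTE (cut_count_even f s)).
by case=> u v /(cycle_step_mem s_cycle) [/= ? ? ?]; apply: cut.
Qed.

End Separation.

Section Opposite.

Variables (n : nat) (adj : rel 'I_n) (a : 'I_n -> 'I_n -> R).

Lemma inQ_opp x z : inQ adj (fun i j => - a i j) x z -> inQ adj a x (- z).
Proof.
case=> x_box [y [y_mc ->]]; split=> //; exists y; split=> //.
change (- edge_sum adj (fun i j => - a i j * y i j) = edge_sum adj (fun i j => a i j * y i j)).
by rewrite edge_sum_opp; apply: eq_edge_sum => i j; ring.
Qed.

Lemma inConvB_opp x z : inConvB adj a x z -> inConvB adj (fun i j => - a i j) x (- z).
Proof.
case/inConvBE=> m [lam [p [lam_w p_box x_avg ->]]]; apply/inConvBE.
exists m, lam, p; split=> //; rewrite -avgN; apply: eq_bigr => k _.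
rewrite !bfun_edge_sum edge_sum_opp; congr (_ * _).
by apply: eq_edge_sum => i j; ring.
Qed.

Lemma inQ_inConvB_opp : (forall x z, inQ adj a x z -> inConvB adj a x z) ->
  forall x z, inQ adj (fun i j => - a i j) x z -> inConvB adj (fun i j => - a i j) x z.
Proof. by move=> QC x z /inQ_opp/QC/inConvB_opp; rewrite Ropp_involutive. Qed.

End Opposite.

Theorem theorem4 (n : nat) (adj : rel 'I_n) (a : 'I_n -> 'I_n -> R)
  (adj_sym : symmetric adj) (adj_irr : irreflexive adj)
  (a_sym : forall i j, a i j = a j i)
  (a_nz : forall i j, adj i j -> a i j <> R0) :
  (forall (x : 'I_n -> R) (z : R), inQ adj a x z <-> inConvB adj a x z)
  <-> even_sign_cycles adj a.
Proof.
have Na_sym i j : - a i j = - a j i by rewrite a_sym.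
have Na_nz i j : adj i j -> - a i j <> 0 by move/a_nz; lra.
split=> [Q_convB s _ _ s_cycle | even].
  split; apply/negP => s_odd.
    have [x [z [xzQ []]]] := odd_cycle_separates adj_sym adj_irr a_sym a_nz s_cycle s_odd.
    exact/Q_convB.
  have [|x [z [xzQ []]]] := odd_cycle_separates adj_sym adj_irr Na_sym Na_nz s_cycle.
    by rewrite (eq_count (a2 := fun st => negb_R (a st.1 st.2))) // => st; rewrite posb_opp.
  by apply: inQ_inConvB_opp xzQ => x' z' /Q_convB.
have [o1 cut1] := even_cycles_cut adj_sym adj_irr (c := fun i j => posb (a i j))
  (fun i j _ => f_equal posb (a_sym i j)) (fun s s3 su sc => (even s s3 su sc).1).
have [o2 cut2] := even_cycles_cut adj_sym adj_irr (c := fun i j => negb_R (a i j))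
  (fun i j _ => f_equal negb_R (a_sym i j)) (fun s s3 su sc => (even s s3 su sc).2).
by move=> x z; split; [apply: (inQ_inConvB cut1 cut2) | apply: inConvB_inQ].
Qed.
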